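(* For the system $$\dot x=-y+x(x^3+xy^2)+\sum_{k=1}^2\varepsilon^k\Big(\lambda_kx+\sum_{i+j=4}a_{k,i,j}x^iy^j\Big),\qquad \dot y=x+y(x^3+xy^2)+\sum_{k=1}^2\varepsilon^k\Big(\lambda_ky+\sum_{i+j=4}b_{k,i,j}x^iy^j\Big)$$ with real coefficients, the first order averaged function satisfies $f_1(z)\equiv0$ on $D=(0,3^{-1/3})$ if and only if $a_{1,1,3}=b_{1,0,4}$, $a_{1,3,1}=b_{1,2,2}$, and $b_{1,4,0}=\lambda_1=0$.
   Context: Averaging framework (first order): in polar coordinates $x=r\cos\theta,y=r\sin\theta$, write $dr/d\theta=F_0(\theta,r)+\varepsilon F_1(\theta,r)+O(\varepsilon^2)$. Here $F_0=r^4\cos\theta$, its solution with $r(0)=z$ is $r(\theta,z)=z(1-3z^3\sin\theta)^{-1/3}$, $2\pi$-periodic and positive for $z\in D=(0,3^{-1/3})$, and $Y(\theta,z)=(1-3z^3\sin\theta)^{-4/3}$ solves $Y'=\partial_rF_0(\theta,r(\theta,z))Y$, $Y(0,z)=1$. The first order averaged function is $f_1(z)=Y(2\pi,z)\int_0^{2\pi}Y(s,z)^{-1}F_1(s,r(s,z))\,ds$. *)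

From Stdlib Require Import Reals Lra.
From Coquelicot Require Import Coquelicot.
Open Scope R_scope.

Definition quartic (c : nat -> nat -> R) (x y : R) : R :=
  sum_f_R0 (fun i => c i (4 - i)%nat * x ^ i * y ^ (4 - i)) 4.

Definition xdot (lam : nat -> R) (a : nat -> nat -> nat -> R) (eps x y : R) : R :=
  - y + x * (x ^ 3 + x * y ^ 2)
  + eps * (lam 1%nat * x + quartic (a 1%nat) x y)
  + eps ^ 2 * (lam 2%nat * x + quartic (a 2%nat) x y).

Definition ydot (lam : nat -> R) (b : nat -> nat -> nat -> R) (eps x y : R) : R :=
  x + y * (x ^ 3 + x * y ^ 2)
  + eps * (lam 1%nat * y + quartic (b 1%nat) x y)
  + eps ^ 2 * (lam 2%nat * y + quartic (b 2%nat) x y).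

(* dr/dtheta in polar coordinates x = r cos th, y = r sin th:
   dr/dtheta = (dr/dt)/(dtheta/dt) with dr/dt = (x xdot + y ydot)/r and
   dtheta/dt = (x ydot - y xdot)/r^2. *)
Definition drdth (lam : nat -> R) (a b : nat -> nat -> nat -> R) (eps th r : R) : R :=
  let x := r * cos th in
  let y := r * sin th in
  let xd := xdot lam a eps x y in
  let yd := ydot lam b eps x y in
  ((x * xd + y * yd) / r) / ((x * yd - y * xd) / r ^ 2).

Definition F1 (lam : nat -> R) (a b : nat -> nat -> nat -> R) (th r : R) : R :=
  Derive (fun eps => drdth lam a b eps th r) 0.

(* Unperturbed solution r(theta, z) and fundamental solution Y(theta, z). *)
Definition rsol (th z : R) : R := z * Rpower (1 - 3 * z ^ 3 * sin th) (- (1 / 3)).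
Definition Ysol (th z : R) : R := Rpower (1 - 3 * z ^ 3 * sin th) (- (4 / 3)).

Definition f1 (lam : nat -> R) (a b : nat -> nat -> nat -> R) (z : R) : R :=
  Ysol (2 * PI) z *
  RInt (fun s => / Ysol s z * F1 lam a b s (rsol s z)) 0 (2 * PI).

From Stdlib Require Import Reals Lra.
From Coquelicot Require Import Coquelicot.
Open Scope R_scope.

(* Write c = cos θ, s = sin θ, A = quartic a_1, B = quartic b_1.  Differentiating
   dr/dθ in ε gives  F1(θ, r) = λ1 r + r^4 (cA + sB) - r^7 c(cB - sA)  (the
   "radial" and "twist" parts).  Along the unperturbed orbit, with
   u = 1 - 3z^3 sin θ, one has r = z u^(-1/3) and Y = u^(-4/3), so the integrand of
   f1 is  λ1 z u + z^4 radial - z^7 twist/u.  The radial part is cos·p(sin) +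
   sin·q(cos) and integrates to 0, hence  f1(z) = 2πλ1 z - z^7 M_0(3z^3), where
   M_n(k) = ∫ twist sin^n / (1 - k sin).  Moreover twist = cos·P(sin) + E(sin)
   with E(t) = (b104-a113)(1-t^2)t^4 + (b122-a131)(1-t^2)^2 t^2 + b140(1-t^2)^3.
   - Sufficiency: if E ≡ 0 and λ1 = 0 then M_0(k) = ∫ cos·(P(sin)/(1-k sin)) = 0.
   - Necessity: M_n is bounded for 0 ≤ k ≤ 1/2, so f1 ≡ 0 forces λ1 = 0 and
     M_0(3z^3) = 0 near 0; the recurrence M_n(k) = M_n(0) + k M_(n+1)(k) then
     kills all moments M_n(0).  Hence ∫ twist·E(sin) = 0, and since
     twist·E(sin) - E(sin)^2 integrates to 0, ∫ E(sin)^2 = 0, so E(sin θ) = 0 on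
     (0, 2π); evaluating at θ = π, π/6, π/3 yields the three conditions. *)

Ltac solve_continuity :=
  apply (@ex_derive_continuous R_AbsRing R_NormedModule); auto_derive; auto.

(* Transport of an [is_RInt] fact along identities of integrands and of values;
   stated on R so that the integrands and values unify with real expressions. *)
Lemma is_RInt_eq (f g : R -> R) (a b l l' : R) :
  (forall x, f x = g x) -> l = l' -> is_RInt f a b l -> is_RInt g a b l'.
Proof. intros Hfg <-. apply is_RInt_ext; auto. Qed.

Lemma ex_RInt_cont (f : R -> R) a b : (forall x, continuous f x) -> ex_RInt f a b.
Proof. intros Hf. apply (@ex_RInt_continuous R_CompleteNormedModule); auto. Qed.

(* Substitution t = sin x: the integral of cos x · φ(sin x) over a period is 0. *)
Lemma RInt_cos_comp_sin (phi : R -> R) :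
  (forall t, -1 <= t <= 1 -> continuous phi t) ->
  is_RInt (fun x => cos x * phi (sin x)) 0 (2 * PI) 0.
Proof.
intros Hphi.
pose proof (is_RInt_comp phi sin cos 0 (2 * PI)) as H.
rewrite sin_0, sin_2PI, RInt_point in H. apply H.
- intros x _. apply Hphi, SIN_bound.
- intros x _. split; [apply is_derive_sin | apply continuous_cos].
Qed.

(* Substitution t = cos x: the integral of sin x · φ(cos x) over a period is 0. *)
Lemma RInt_sin_comp_cos (phi : R -> R) :
  (forall t, -1 <= t <= 1 -> continuous phi t) ->
  is_RInt (fun x => sin x * phi (cos x)) 0 (2 * PI) 0.
Proof.
intros Hphi.
pose proof (is_RInt_comp phi cos (fun x => - sin x) 0 (2 * PI)) as H.
rewrite cos_0, cos_2PI, RInt_point in H.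
apply (is_RInt_eq (fun x => - (- sin x * phi (cos x))) _ _ _ (- 0));
  [intros; ring | apply Ropp_0 |].
apply (@is_RInt_opp R_NormedModule), H.
- intros x _. apply Hphi, COS_bound.
- intros x _. split; [apply is_derive_cos | solve_continuity].
Qed.

(* A continuous nonnegative function with zero integral over [a, b] vanishes on
   (a, b): otherwise it would exceed half its value on a small interval. *)
Lemma nonneg_zero_integral (f : R -> R) a b x0 :
  (forall x, continuous f x) -> (forall x, 0 <= f x) ->
  is_RInt f a b 0 -> a < x0 < b -> f x0 = 0.
Proof.
intros Hc Hp HI Hx.
destruct (Hp x0) as [Hlt|]; [exfalso | auto].
assert (Hnear : locally x0 (fun x => ball (f x0) (f x0 / 2) (f x))).
{ apply (proj1 (filterlim_locally (F := locally x0) f (f x0)) (Hc x0)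
    (mkposreal (f x0 / 2) ltac:(lra))). }
destruct Hnear as [d Hd].
set (e := Rmin (d / 2) (Rmin ((x0 - a) / 2) ((b - x0) / 2))).
assert (He : 0 < e) by (unfold e; destruct d; simpl; repeat apply Rmin_pos; lra).
assert (He1 : e <= d / 2) by apply Rmin_l.
assert (He2 : e <= (x0 - a) / 2) by (eapply Rle_trans; [apply Rmin_r | apply Rmin_l]).
assert (He3 : e <= (b - x0) / 2) by (eapply Rle_trans; [apply Rmin_r | apply Rmin_r]).
assert (Hchasles : forall u v w, RInt f u v + RInt f v w = RInt f u w).
{ intros. apply (@RInt_Chasles R_CompleteNormedModule); apply ex_RInt_cont, Hc. }
apply (@is_RInt_unique R_CompleteNormedModule) in HI.
rewrite <- (Hchasles a (x0 - e) b), <- (Hchasles (x0 - e) (x0 + e) b) in HI.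
assert (0 <= RInt f a (x0 - e)) by (apply RInt_ge_0; [lra | apply ex_RInt_cont, Hc | auto]).
assert (0 <= RInt f (x0 + e) b) by (apply RInt_ge_0; [lra | apply ex_RInt_cont, Hc | auto]).
assert (0 < RInt f (x0 - e) (x0 + e)); [|lra].
apply RInt_gt_0; [lra | | intros; apply Hc].
intros x Hx'. assert (B : ball x0 d x).
{ unfold ball; simpl; unfold AbsRing_ball, abs, minus, plus, opp; simpl. apply Rabs_def1; lra. }
specialize (Hd x B). unfold ball in Hd; simpl in Hd.
unfold AbsRing_ball, abs, minus, plus, opp in Hd; simpl in Hd.
apply Rabs_def2 in Hd. lra.
Qed.

Lemma zero_of_small c M d : 0 < d -> (forall z, 0 < z < d -> Rabs c <= z * M) -> c = 0.
Proof.
intros Hd Hc. destruct (Req_dec c 0) as [|Hne]; [assumption | exfalso].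
assert (Hpos : 0 < Rabs c) by (apply Rabs_pos_lt, Hne).
pose proof (Rabs_pos M) as HM.
set (z := Rmin (d / 2) (Rabs c / (2 * (Rabs M + 1)))).
assert (Hz1 : 0 < z) by (apply Rmin_pos; [lra | apply Rdiv_lt_0_compat; lra]).
assert (Hz2 : z <= d / 2) by apply Rmin_l.
assert (Hz3 : z * (Rabs M + 1) <= Rabs c / 2).
{ replace (Rabs c / 2) with (Rabs c / (2 * (Rabs M + 1)) * (Rabs M + 1)) by (field; lra).
  apply Rmult_le_compat_r; [lra | apply Rmin_r]. }
specialize (Hc z ltac:(lra)).
pose proof (Rmult_le_compat_l z _ _ (Rlt_le _ _ Hz1) (Rle_abs M)).
lra.
Qed.

Lemma cos_sin_sq x : cos x ^ 2 + sin x ^ 2 = 1.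
Proof. rewrite <- (sin2_cos2 x); unfold Rsqr; ring. Qed.

Lemma denom_pos k s : 0 <= k < 1 -> 0 < 1 - k * sin s.
Proof. intros Hk. pose proof (SIN_bound s). nra. Qed.

Lemma denom_ge_half k s : 0 <= k <= 1/2 -> 1/2 <= 1 - k * sin s.
Proof. intros Hk. pose proof (SIN_bound s). nra. Qed.

Lemma cube_lt x y : 0 <= x < y -> x ^ 3 < y ^ 3.
Proof.
intros [Hx Hxy]. assert (0 < y ^ 2 + y * x + x ^ 2) by nra.
replace (y ^ 3) with (x ^ 3 + (y - x) * (y ^ 2 + y * x + x ^ 2)) by ring. nra.
Qed.

Lemma Rpower_third_cube u : 0 < u -> Rpower u (-(1/3)) ^ 3 = / u.
Proof.
intros Hu. rewrite <- Rpower_pow by (unfold Rpower; apply exp_pos).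
rewrite Rpower_mult. replace (-(1/3) * INR 3) with (- (1)) by (simpl; field).
rewrite Rpower_Ropp, Rpower_1 by exact Hu. reflexivity.
Qed.

Lemma window_cube z : 0 <= z < Rpower 3 (-(1/3)) -> 3 * z ^ 3 < 1.
Proof.
intros Hz. pose proof (cube_lt _ _ Hz) as H.
rewrite Rpower_third_cube in H by lra. lra.
Qed.

(* D contains (0, 1/2), where the estimates of the necessity part are made. *)
Lemma half_in_window : 1/2 < Rpower 3 (-(1/3)).
Proof.
destruct (Rlt_or_le (1/2) (Rpower 3 (-(1/3)))) as [|Hle]; [assumption|].
assert (Hpos : 0 <= Rpower 3 (-(1/3))) by (unfold Rpower; left; apply exp_pos).
pose proof (pow_incr _ _ 3 (conj Hpos Hle)) as H.
rewrite Rpower_third_cube in H by lra. lra.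
Qed.

Lemma small_window z : 0 < z < 1/2 -> 0 <= 3 * z ^ 3 <= 1/2 /\ z ^ 3 <= z / 4.
Proof.
intros Hz. assert (z ^ 2 <= 1/4) by nra.
replace (z ^ 3) with (z * z ^ 2) by ring. split; [split|]; nra.
Qed.

Lemma quartic_hom q r x y : quartic q (r * x) (r * y) = r ^ 4 * quartic q x y.
Proof. unfold quartic; cbn [sum_f_R0 Nat.sub]. ring. Qed.

(* On the unit circle (c, s), with A = quartic a_1 and B = quartic b_1: the radial
   component cA + sB of the first order perturbation, and c times its angular
   component cB - sA. *)
Definition radial (a b : nat -> nat -> nat -> R) (c s : R) : R :=
  c * quartic (a 1%nat) c s + s * quartic (b 1%nat) c s.

Definition twist (a b : nat -> nat -> nat -> R) (c s : R) : R :=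
  c * (c * quartic (b 1%nat) c s - s * quartic (a 1%nat) c s).

(* First order term of dr/dθ.  After differentiation at ε = 0 the denominator
   (x ẏ - y ẋ)/r^2 reduces to c^2 + s^2 = 1. *)
Lemma F1_formula lam a b th r : r <> 0 ->
  F1 lam a b th r =
  lam 1%nat * r + r ^ 4 * radial a b (cos th) (sin th) - r ^ 7 * twist a b (cos th) (sin th).
Proof.
intros Hr. unfold F1, radial, twist. apply is_derive_unique.
pose proof (cos_sin_sq th) as Hcs.
unfold drdth, xdot, ydot; rewrite !quartic_hom.
revert Hcs; generalize (cos th) (sin th); intros c s Hcs.
auto_derive.
all: match goal with |- context [?E * / (?r * (?r * 1))] =>
  replace E with (r ^ 2) by (transitivity (r ^ 2 * (c ^ 2 + s ^ 2)); [rewrite Hcs | ]; ring) end.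
- cbn [pow]; rewrite Rinv_r; [lra | apply Rmult_integral_contrapositive; split; lra].
- (* the remaining identity is a multiple of c^2 + s^2 - 1 *)
  field_simplify_eq; [|exact Hr]. apply Rminus_diag_uniq.
  set (A := quartic (a 1%nat) c s); set (B := quartic (b 1%nat) c s).
  transitivity ((c ^ 2 + s ^ 2 - 1) *
    ((c ^ 2 + s ^ 2 + 1) * r ^ 10 * c * (s * A - c * B) + r ^ 4 * lam 1%nat));
    [ring | rewrite Hcs; ring].
Qed.

Lemma integrand_formula lam a b z s : 0 < z -> 0 < 1 - 3 * z ^ 3 * sin s ->
  / Ysol s z * F1 lam a b s (rsol s z) =
  lam 1%nat * z * (1 - 3 * z ^ 3 * sin s) + z ^ 4 * radial a b (cos s) (sin s)
  - z ^ 7 * (twist a b (cos s) (sin s) / (1 - 3 * z ^ 3 * sin s)).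
Proof.
intros Hz Hu. unfold Ysol, rsol.
set (u := 1 - 3 * z ^ 3 * sin s) in *.
assert (HU : 0 < Rpower u (-(1/3))) by (unfold Rpower; apply exp_pos).
assert (HY : Rpower u (-(4/3)) = Rpower u (-(1/3)) ^ 4).
{ rewrite <- (Rpower_pow 4 _ HU), Rpower_mult. f_equal. simpl; field. }
assert (Hu3 : u = / Rpower u (-(1/3)) ^ 3) by (rewrite Rpower_third_cube, Rinv_inv; auto).
rewrite HY, F1_formula by (apply Rmult_integral_contrapositive; split; lra).
revert HU Hu3; generalize (Rpower u (-(1/3))); intros U HU Hu3.
rewrite Hu3. field. lra.
Qed.

(* Using c^2 = 1 - s^2, the radial part is cos·(poly in sin) + sin·(poly in cos),
   and the twist is cos·(odd part) + (even part), both polynomials in sin. *)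
Definition radial_cos (a b : nat -> nat -> nat -> R) (t : R) : R :=
  (a 1%nat 0%nat 4%nat + b 1%nat 1%nat 3%nat) * t ^ 4
  + (a 1%nat 2%nat 2%nat + b 1%nat 3%nat 1%nat) * (1 - t ^ 2) * t ^ 2
  + a 1%nat 4%nat 0%nat * (1 - t ^ 2) ^ 2.

Definition radial_sin (a b : nat -> nat -> nat -> R) (t : R) : R :=
  (a 1%nat 1%nat 3%nat + b 1%nat 2%nat 2%nat) * t ^ 2 * (1 - t ^ 2)
  + (a 1%nat 3%nat 1%nat + b 1%nat 4%nat 0%nat) * t ^ 4
  + b 1%nat 0%nat 4%nat * (1 - t ^ 2) ^ 2.

Definition twist_odd (a b : nat -> nat -> nat -> R) (t : R) : R :=
  (b 1%nat 1%nat 3%nat - a 1%nat 2%nat 2%nat) * (1 - t ^ 2) * t ^ 3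
  + (b 1%nat 3%nat 1%nat - a 1%nat 4%nat 0%nat) * (1 - t ^ 2) ^ 2 * t
  - a 1%nat 0%nat 4%nat * t ^ 5.

(* The obstruction: f1 ≡ 0 exactly when this polynomial and λ1 vanish. *)
Definition twist_even (a b : nat -> nat -> nat -> R) (t : R) : R :=
  (b 1%nat 0%nat 4%nat - a 1%nat 1%nat 3%nat) * (1 - t ^ 2) * t ^ 4
  + (b 1%nat 2%nat 2%nat - a 1%nat 3%nat 1%nat) * (1 - t ^ 2) ^ 2 * t ^ 2
  + b 1%nat 4%nat 0%nat * (1 - t ^ 2) ^ 3.

Lemma radial_split a b x :
  radial a b (cos x) (sin x) = cos x * radial_cos a b (sin x) + sin x * radial_sin a b (cos x).
Proof.
pose proof (cos_sin_sq x) as Hcs. revert Hcs; generalize (cos x) (sin x); intros c s Hcs.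
unfold radial, radial_cos, radial_sin, quartic; cbn [sum_f_R0 Nat.sub].
replace (1 - s ^ 2) with (c ^ 2) by lra. replace (1 - c ^ 2) with (s ^ 2) by lra. ring.
Qed.

Lemma twist_split a b x :
  twist a b (cos x) (sin x) = cos x * twist_odd a b (sin x) + twist_even a b (sin x).
Proof.
pose proof (cos_sin_sq x) as Hcs. revert Hcs; generalize (cos x) (sin x); intros c s Hcs.
unfold twist, twist_odd, twist_even, quartic; cbn [sum_f_R0 Nat.sub].
replace (1 - s ^ 2) with (c ^ 2) by lra. ring.
Qed.

Lemma RInt_radial a b : is_RInt (fun s => radial a b (cos s) (sin s)) 0 (2 * PI) 0.
Proof.
apply (is_RInt_eq (fun s => cos s * radial_cos a b (sin s) + sin s * radial_sin a b (cos s))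
  _ _ _ (0 + 0)); [intros; symmetry; apply radial_split | apply Rplus_0_r |].
apply (@is_RInt_plus R_NormedModule);
  [apply RInt_cos_comp_sin | apply RInt_sin_comp_cos];
  intros; unfold radial_cos, radial_sin; solve_continuity.
Qed.

Definition moment (a b : nat -> nat -> nat -> R) (n : nat) (k : R) : R :=
  RInt (fun s => twist a b (cos s) (sin s) * sin s ^ n / (1 - k * sin s)) 0 (2 * PI).

Lemma ex_moment a b n k : 0 <= k < 1 ->
  ex_RInt (fun s => twist a b (cos s) (sin s) * sin s ^ n / (1 - k * sin s)) 0 (2 * PI).
Proof.
intros Hk. apply ex_RInt_cont. intros x.
unfold twist, quartic; cbn [sum_f_R0 Nat.sub]. solve_continuity.
apply Rgt_not_eq, denom_pos, Hk.
Qed.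

(* The averaged function in closed form (Y(2π, z) = 1). *)
Lemma f1_formula lam a b z : 0 < z -> 3 * z ^ 3 < 1 ->
  f1 lam a b z = 2 * PI * lam 1%nat * z - z ^ 7 * moment a b 0 (3 * z ^ 3).
Proof.
intros Hz Hk. set (k := 3 * z ^ 3) in *.
assert (Hk0 : 0 <= k < 1) by (split; [unfold k; pose proof (pow_le z 3); lra | exact Hk]).
assert (HY : Ysol (2 * PI) z = 1).
{ unfold Ysol. rewrite sin_2PI, Rmult_0_r, Rminus_0_r. unfold Rpower.
  rewrite ln_1, Rmult_0_r. apply exp_0. }
unfold f1. rewrite HY, Rmult_1_l. apply is_RInt_unique.
apply (is_RInt_eq (fun s => lam 1%nat * z * (1 - k * sin s) + z ^ 4 * radial a b (cos s) (sin s)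
   - z ^ 7 * (twist a b (cos s) (sin s) * sin s ^ 0 / (1 - k * sin s))) _ _ _
   (lam 1%nat * z * (2 * PI - 0) + z ^ 4 * 0 - z ^ 7 * moment a b 0 k)).
- intros s. rewrite integrand_formula by (auto; apply denom_pos, Hk0).
  fold k. rewrite pow_O, Rmult_1_r. reflexivity.
- ring.
- apply (@is_RInt_minus R_NormedModule); [apply (@is_RInt_plus R_NormedModule)|];
    apply (@is_RInt_scal R_NormedModule).
  + apply (is_RInt_eq (fun s => 1 - k * sin s) _ _ _ ((2 * PI - 0) * 1 - k * 0));
    [reflexivity | ring |].
    apply (@is_RInt_minus R_NormedModule);
      [apply (@is_RInt_const R_NormedModule) | apply (@is_RInt_scal R_NormedModule)].
    apply (is_RInt_eq (fun s => sin s * 1) _ _ _ 0); [intros; ring | reflexivity |].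
    apply (RInt_sin_comp_cos (fun _ => 1)). intros; apply continuous_const.
  + apply RInt_radial.
  + apply (@RInt_correct R_CompleteNormedModule), ex_moment, Hk0.
Qed.

(* Expanding 1/(1 - k sin) one step: M_n(k) = M_n(0) + k M_(n+1)(k). *)
Lemma moment_recurrence a b n k : 0 <= k < 1 ->
  moment a b n k = moment a b n 0 + k * moment a b (S n) k.
Proof.
intros Hk. unfold moment at 1. apply is_RInt_unique.
apply (is_RInt_eq (fun s => twist a b (cos s) (sin s) * sin s ^ n / (1 - 0 * sin s)
   + k * (twist a b (cos s) (sin s) * sin s ^ S n / (1 - k * sin s))) _ _ _
   (moment a b n 0 + k * moment a b (S n) k)).
- intros s. pose proof (denom_pos k s Hk). cbn [pow]. field. lra.
- reflexivity.
- apply (@is_RInt_plus R_NormedModule); [|apply (@is_RInt_scal R_NormedModule)];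
    apply (@RInt_correct R_CompleteNormedModule), ex_moment; lra.
Qed.

Lemma pow_abs_le_1 x n : Rabs x <= 1 -> Rabs (x ^ n) <= 1.
Proof.
intros Hx. rewrite <- RPow_abs, <- (pow1 n). apply pow_incr. split; [apply Rabs_pos | exact Hx].
Qed.

Definition coef_size (q : nat -> nat -> R) : R :=
  sum_f_R0 (fun i => Rabs (q i (4 - i)%nat)) 4.

Lemma quartic_bound q c s : Rabs c <= 1 -> Rabs s <= 1 -> Rabs (quartic q c s) <= coef_size q.
Proof.
intros Hc Hs. eapply Rle_trans; [apply Rsum_abs | apply sum_Rle].
intros i _. rewrite !Rabs_mult, Rmult_assoc.
rewrite <- (Rmult_1_r (Rabs (q i (4 - i)%nat))) at 2.
apply Rmult_le_compat_l; [apply Rabs_pos|]. rewrite <- (Rmult_1_r 1).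
apply Rmult_le_compat; try apply Rabs_pos; apply pow_abs_le_1; assumption.
Qed.

Definition twist_size (a b : nat -> nat -> nat -> R) : R :=
  coef_size (a 1%nat) + coef_size (b 1%nat).

Lemma twist_bound a b x : Rabs (twist a b (cos x) (sin x)) <= twist_size a b.
Proof.
assert (Hc : Rabs (cos x) <= 1) by (apply Rabs_le, COS_bound).
assert (Hs : Rabs (sin x) <= 1) by (apply Rabs_le, SIN_bound).
pose proof (quartic_bound (a 1%nat) _ _ Hc Hs) as HA.
pose proof (quartic_bound (b 1%nat) _ _ Hc Hs) as HB.
unfold twist, twist_size, Rminus. rewrite Rabs_mult.
pose proof (Rabs_triang (cos x * quartic (b 1%nat) (cos x) (sin x))
  (- (sin x * quartic (a 1%nat) (cos x) (sin x)))) as Htri.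
rewrite Rabs_Ropp, !Rabs_mult in Htri.
assert (Hcb : Rabs (cos x) * Rabs (quartic (b 1%nat) (cos x) (sin x)) <= coef_size (b 1%nat)).
{ rewrite <- (Rmult_1_l (coef_size _)). apply Rmult_le_compat; auto using Rabs_pos. }
assert (Hsa : Rabs (sin x) * Rabs (quartic (a 1%nat) (cos x) (sin x)) <= coef_size (a 1%nat)).
{ rewrite <- (Rmult_1_l (coef_size _)). apply Rmult_le_compat; auto using Rabs_pos. }
pose proof (Rabs_pos (cos x)).
pose proof (Rabs_pos (cos x * quartic (b 1%nat) (cos x) (sin x)
  + - (sin x * quartic (a 1%nat) (cos x) (sin x)))).
nra.
Qed.

Lemma moment_bound a b n k : 0 <= k <= 1/2 ->
  Rabs (moment a b n k) <= 4 * PI * twist_size a b.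
Proof.
intros Hk. pose proof PI_RGT_0.
replace (4 * PI * twist_size a b) with ((2 * PI - 0) * (2 * twist_size a b)) by ring.
apply abs_RInt_le_const; [lra | apply ex_moment; lra |].
intros s _. pose proof (denom_ge_half k s Hk) as Hu.
unfold Rdiv. rewrite !Rabs_mult, Rabs_inv, (Rabs_pos_eq (1 - k * sin s)) by lra.
pose proof (twist_bound a b s) as HG.
assert (Hs : Rabs (sin s ^ n) <= 1) by (apply pow_abs_le_1, Rabs_le, SIN_bound).
assert (Hinv : / (1 - k * sin s) <= 2).
{ replace 2 with (/ (1/2)) by field. apply Rinv_le_contravar; lra. }
pose proof (Rabs_pos (twist a b (cos s) (sin s))). pose proof (Rabs_pos (sin s ^ n)).
assert (0 < / (1 - k * sin s)) by (apply Rinv_0_lt_compat; lra).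
assert (Rabs (twist a b (cos s) (sin s)) * Rabs (sin s ^ n) <= twist_size a b) by nra.
nra.
Qed.

Lemma f1_near_0 lam a b :
  (forall z, 0 < z < Rpower 3 (- (1 / 3)) -> f1 lam a b z = 0) ->
  forall z, 0 < z < 1/2 -> 2 * PI * lam 1%nat * z = z ^ 7 * moment a b 0 (3 * z ^ 3).
Proof.
intros Hf z Hz. destruct (small_window z Hz) as [Hk _].
pose proof half_in_window.
rewrite <- (Rminus_0_r (2 * PI * lam 1%nat * z)), <- (Hf z) by lra.
rewrite f1_formula by lra. ring.
Qed.

(* Dividing the identity above by z and letting z → 0 gives λ1 = 0. *)
Lemma lam1_zero lam a b :
  (forall z, 0 < z < Rpower 3 (- (1 / 3)) -> f1 lam a b z = 0) -> lam 1%nat = 0.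
Proof.
intros Hf. pose proof PI_RGT_0 as Hpi.
enough (H : 2 * PI * lam 1%nat = 0) by nra.
apply (zero_of_small _ (4 * PI * twist_size a b) (1/2)); [lra|].
intros z Hz. destruct (small_window z Hz) as [Hk Hz3].
assert (E : 2 * PI * lam 1%nat = z ^ 6 * moment a b 0 (3 * z ^ 3)).
{ apply (Rmult_eq_reg_r z); [|lra]. rewrite (f1_near_0 lam a b Hf z Hz). ring. }
assert (Hz6 : z ^ 6 <= z)
  by (replace (z ^ 6) with (z ^ 3 * z ^ 3) by ring; pose proof (pow_le z 3); nra).
rewrite E, Rabs_mult, (Rabs_pos_eq (z ^ 6)) by (apply pow_le; lra).
pose proof (moment_bound a b 0 _ Hk). pose proof (Rabs_pos (moment a b 0 (3 * z ^ 3))).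
pose proof (pow_le z 6). nra.
Qed.

Lemma moment0_near_0 lam a b :
  (forall z, 0 < z < Rpower 3 (- (1 / 3)) -> f1 lam a b z = 0) ->
  forall z, 0 < z < 1/2 -> moment a b 0 (3 * z ^ 3) = 0.
Proof.
intros Hf z Hz. pose proof (f1_near_0 lam a b Hf z Hz) as E.
rewrite (lam1_zero lam a b Hf) in E.
assert (z ^ 7 <> 0) by (apply pow_nonzero; lra).
apply (Rmult_eq_reg_l (z ^ 7)); [lra | assumption].
Qed.

(* If M_n(3z^3) vanishes near 0, then M_n(0) = -3z^3 M_(n+1)(3z^3) = O(z), so it is 0; *)
Lemma moment_at_0 a b n :
  (forall z, 0 < z < 1/2 -> moment a b n (3 * z ^ 3) = 0) -> moment a b n 0 = 0.
Proof.
intros Hn. pose proof PI_RGT_0 as Hpi.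
apply (zero_of_small _ (4 * PI * twist_size a b) (1/2)); [lra|].
intros z Hz. destruct (small_window z Hz) as [Hk Hz3].
pose proof (moment_recurrence a b n (3 * z ^ 3) ltac:(lra)) as E.
rewrite Hn in E by assumption.
replace (moment a b n 0) with (- (3 * z ^ 3) * moment a b (S n) (3 * z ^ 3)) by lra.
rewrite Rabs_mult, Rabs_Ropp, (Rabs_pos_eq (3 * z ^ 3)) by lra.
pose proof (moment_bound a b (S n) _ Hk). pose proof (Rabs_pos (moment a b (S n) (3 * z ^ 3))).
nra.
Qed.

Lemma moment_succ a b n :
  (forall z, 0 < z < 1/2 -> moment a b n (3 * z ^ 3) = 0) ->
  forall z, 0 < z < 1/2 -> moment a b (S n) (3 * z ^ 3) = 0.
Proof.
intros Hn z Hz. destruct (small_window z Hz) as [Hk _].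
pose proof (moment_recurrence a b n (3 * z ^ 3) ltac:(lra)) as E.
rewrite Hn, moment_at_0 in E by assumption.
assert (0 < z ^ 3) by (apply pow_lt; lra).
apply (Rmult_eq_reg_l (3 * z ^ 3)); lra.
Qed.

Lemma moments_vanish a b :
  (forall z, 0 < z < 1/2 -> moment a b 0 (3 * z ^ 3) = 0) -> forall n, moment a b n 0 = 0.
Proof.
intros H0 n. apply moment_at_0.
induction n as [|n IH]; [exact H0 | exact (moment_succ a b n IH)].
Qed.

Lemma moment_is_RInt a b n :
  is_RInt (fun s => twist a b (cos s) (sin s) * sin s ^ n) 0 (2 * PI) (moment a b n 0).
Proof.
apply (is_RInt_eq (fun s => twist a b (cos s) (sin s) * sin s ^ n / (1 - 0 * sin s))
  _ _ _ (moment a b n 0)); [intros; field_simplify; reflexivity | reflexivity |].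
apply (@RInt_correct R_CompleteNormedModule), ex_moment; lra.
Qed.

Lemma polynomial_moments a b (p : nat -> R) N :
  (forall n, moment a b n 0 = 0) ->
  is_RInt (fun s => twist a b (cos s) (sin s) * sum_f_R0 (fun i => p i * sin s ^ i) N)
    0 (2 * PI) 0.
Proof.
intros Hm. induction N as [|N IH].
- apply (is_RInt_eq (fun s => p 0%nat * (twist a b (cos s) (sin s) * sin s ^ 0)) _ _ _
    (p 0%nat * moment a b 0 0)); [intros; simpl; ring | rewrite Hm; ring |].
  apply (@is_RInt_scal R_NormedModule), moment_is_RInt.
- apply (is_RInt_eq (fun s => twist a b (cos s) (sin s) * sum_f_R0 (fun i => p i * sin s ^ i) N
    + p (S N) * (twist a b (cos s) (sin s) * sin s ^ S N)) _ _ _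
    (0 + p (S N) * moment a b (S N) 0)); [intros; simpl; ring | rewrite Hm; ring |].
  apply (@is_RInt_plus R_NormedModule); [exact IH|].
  apply (@is_RInt_scal R_NormedModule), moment_is_RInt.
Qed.

Definition twist_even_coef (a b : nat -> nat -> nat -> R) (i : nat) : R :=
  let al := b 1%nat 0%nat 4%nat - a 1%nat 1%nat 3%nat in
  let be := b 1%nat 2%nat 2%nat - a 1%nat 3%nat 1%nat in
  let ga := b 1%nat 4%nat 0%nat in
  match i with
  | 0%nat => ga
  | 2%nat => be - 3 * ga
  | 4%nat => al - 2 * be + 3 * ga
  | 6%nat => - al + be - ga
  | _ => 0
  end.

Lemma twist_even_expand a b t :
  twist_even a b t = sum_f_R0 (fun i => twist_even_coef a b i * t ^ i) 6.
Proof. unfold twist_even, twist_even_coef; simpl. ring. Qed.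

(* twist·E(sin) = E(sin)^2 + cos·(P·E)(sin), and both twist·E(sin) and the
   last term integrate to 0. *)
Lemma twist_even_sq_integral a b :
  (forall n, moment a b n 0 = 0) ->
  is_RInt (fun s => twist_even a b (sin s) ^ 2) 0 (2 * PI) 0.
Proof.
intros Hm.
apply (is_RInt_eq (fun s => twist a b (cos s) (sin s) * twist_even a b (sin s)
  - cos s * (twist_odd a b (sin s) * twist_even a b (sin s))) _ _ _ (0 - 0));
  [intros; rewrite twist_split; ring | ring |].
apply (@is_RInt_minus R_NormedModule).
- apply (is_RInt_eq (fun s => twist a b (cos s) (sin s)
    * sum_f_R0 (fun i => twist_even_coef a b i * sin s ^ i) 6) _ _ _ 0);
    [intros; rewrite twist_even_expand; reflexivity | reflexivity |].
  apply polynomial_moments, Hm.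
- apply (RInt_cos_comp_sin (fun t => twist_odd a b t * twist_even a b t)).
  intros; unfold twist_odd, twist_even; solve_continuity.
Qed.

Lemma twist_even_vanishes a b :
  (forall n, moment a b n 0 = 0) -> forall x, 0 < x < 2 * PI -> twist_even a b (sin x) = 0.
Proof.
intros Hm x Hx.
assert (Hsq : twist_even a b (sin x) ^ 2 = 0).
{ apply (nonneg_zero_integral (fun s => twist_even a b (sin s) ^ 2) 0 (2 * PI)); auto.
  - intros y. unfold twist_even. solve_continuity.
  - intros y. apply pow2_ge_0.
  - apply twist_even_sq_integral, Hm. }
nra.
Qed.

(* Evaluation at sin π = 0, sin(π/6) = 1/2 and sin(π/3) = √3/2. *)
Lemma coefficients_of_twist_even a b :
  (forall x, 0 < x < 2 * PI -> twist_even a b (sin x) = 0) ->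
  a 1%nat 1%nat 3%nat = b 1%nat 0%nat 4%nat /\ a 1%nat 3%nat 1%nat = b 1%nat 2%nat 2%nat /\
  b 1%nat 4%nat 0%nat = 0.
Proof.
intros H. pose proof PI_RGT_0.
pose proof (H PI ltac:(lra)) as E0. pose proof (H (PI / 6) ltac:(lra)) as E1.
pose proof (H (PI / 3) ltac:(lra)) as E2.
rewrite sin_PI in E0. rewrite sin_PI6 in E1. rewrite sin_PI3 in E2.
assert (Hs2 : (sqrt 3 / 2) ^ 2 = 3 / 4).
{ unfold Rdiv. rewrite Rpow_mult_distr, pow2_sqrt by lra. field. }
unfold twist_even in E0, E1, E2.
replace ((sqrt 3 / 2) ^ 4) with (((sqrt 3 / 2) ^ 2) ^ 2) in E2 by ring.
rewrite Hs2 in E2. cbn [pow] in E0, E1, E2.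
repeat split; lra.
Qed.

(* Sufficiency: with E ≡ 0 the weighted twist is cos·(P(sin)/(1 - k sin)). *)
Lemma f1_vanishes_of_conditions lam a b :
  a 1%nat 1%nat 3%nat = b 1%nat 0%nat 4%nat -> a 1%nat 3%nat 1%nat = b 1%nat 2%nat 2%nat ->
  b 1%nat 4%nat 0%nat = 0 -> lam 1%nat = 0 ->
  forall z, 0 < z < Rpower 3 (- (1 / 3)) -> f1 lam a b z = 0.
Proof.
intros H1 H2 H3 H4 z Hz.
assert (Hk : 0 <= 3 * z ^ 3 < 1)
  by (split; [pose proof (pow_le z 3); lra | apply window_cube; lra]).
rewrite f1_formula, H4 by lra.
enough (Hm : moment a b 0 (3 * z ^ 3) = 0) by (rewrite Hm; ring).
unfold moment. set (k := 3 * z ^ 3) in *.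
apply (@is_RInt_unique R_CompleteNormedModule).
apply (is_RInt_eq (fun s => cos s * (twist_odd a b (sin s) / (1 - k * sin s))) _ _ _ 0);
  [| reflexivity |].
- intros s. rewrite twist_split.
  replace (twist_even a b (sin s)) with 0 by (unfold twist_even; rewrite H1, H2, H3; ring).
  pose proof (denom_pos k s Hk). rewrite pow_O. field. lra.
- apply (RInt_cos_comp_sin (fun t => twist_odd a b t / (1 - k * t))).
  intros t Ht. unfold twist_odd. solve_continuity. nra.
Qed.

Theorem mainTheorem8 (lam : nat -> R) (a b : nat -> nat -> nat -> R) :
  (forall z : R, 0 < z < Rpower 3 (- (1 / 3)) -> f1 lam a b z = 0) <->
  (a 1%nat 1%nat 3%nat = b 1%nat 0%nat 4%nat /\
   a 1%nat 3%nat 1%nat = b 1%nat 2%nat 2%nat /\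
   b 1%nat 4%nat 0%nat = 0 /\ lam 1%nat = 0).
Proof.
split.
- intros Hf.
  pose proof (moments_vanish a b (moment0_near_0 lam a b Hf)) as Hm.
  destruct (coefficients_of_twist_even a b (twist_even_vanishes a b Hm)) as (H1 & H2 & H3).
  repeat split; [exact H1 | exact H2 | exact H3 | exact (lam1_zero lam a b Hf)].
- intros (H1 & H2 & H3 & H4). exact (f1_vanishes_of_conditions lam a b H1 H2 H3 H4).
Qed.
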